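(* Let $p$ be a prime and $G$ a $p$-group of order $p^m$ with $|G/Z(G)|=p^2$. Then $$A_G(t)=\frac{1}{p^m}\left(\frac{p^{m-2}}{1-p^mt}+\frac{p^m-p^{m-2}}{1-p^{m-1}t}\right).$$
   Context: For a finite group $G$ and $n\ge0$, let $\alpha_{G,n}$ be the number of orbits of $G$ acting on $G^n$ by simultaneous conjugation $g\cdot(x_1,\dots,x_n)=(gx_1g^{-1},\dots,gx_ng^{-1})$, and $A_G(t)=\sum_{n\ge0}\alpha_{G,n}t^n$, viewed as a rational function of $t$. *)

From HB Require Import structures.
From mathcomp Require Import all_boot all_order all_algebra all_fingroup all_solvable.
Set Implicit Arguments. Unset Strict Implicit. Unset Printing Implicit Defensive.

Definition tuples_in (gT : finGroupType) (G : {group gT}) (n : nat)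
  : {set {ffun 'I_n -> gT}} :=
  [set x : {ffun 'I_n -> gT} | [forall i, x i \in G]].

Definition tconj (gT : finGroupType) (n : nat) (x : {ffun 'I_n -> gT}) (g : gT)
  : {ffun 'I_n -> gT} := [ffun i => (x i ^ g)%g].

Definition sconj_orbit (gT : finGroupType) (G : {group gT}) (n : nat)
  (x : {ffun 'I_n -> gT}) : {set {ffun 'I_n -> gT}} :=
  [set tconj x g | g in G].

Definition alpha (gT : finGroupType) (G : {group gT}) (n : nat) : nat :=
  #|[set sconj_orbit G x | x in tuples_in G n]|.

From mathcomp Require Import all_boot all_algebra all_fingroup all_solvable.
Set Implicit Arguments.
Unset Strict Implicit.
Unset Printing Implicit Defensive.
Import GRing.Theory Num.Theory.
Local Open Scope ring_scope.

(* By the Cauchy-Frobenius lemma, alpha G n * |G| is the number of fixed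
   points summed over a in G; an n-tuple is fixed by a exactly when all its
   entries lie in C_G(a), so a contributes |C_G(a)|^n.  Central a contribute
   |G|^n.  For a noncentral a we have Z(G) < C_G(a) < G, and since
   |G : Z(G)| = p^2 both indices are p, so a contributes (|G|/p)^n. *)

Section SimultaneousConjugation.
Local Open Scope group_scope.
Variables (gT : finGroupType) (n : nat).

Lemma tconj1 (x : {ffun 'I_n -> gT}) : tconj x 1 = x.
Proof. by apply/ffunP => i; rewrite ffunE conjg1. Qed.

Lemma tconjM (x : {ffun 'I_n -> gT}) : act_morph (@tconj gT n) x.
Proof. by move=> a b; apply/ffunP => i; rewrite !ffunE conjgM. Qed.

Definition tconj_action := TotalAction tconj1 tconjM.

Lemma acts_tconj (G : {group gT}) : [acts G, on tuples_in G n | tconj_action].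
Proof.
apply/subsetP => a Ga; rewrite !inE; apply/subsetP => x.
by rewrite !inE => /forallP Gx; apply/forallP => i; rewrite ffunE groupJ.
Qed.

Lemma afix_tconj (G : {group gT}) a :
  'Fix_(tuples_in G n | tconj_action)[a] =i ffun_on 'C_G[a].
Proof.
move=> x; rewrite in_setI inE; apply/andP/ffun_onP => [[/forallP Gx /afix1P xa] i | Cx].
  rewrite inE Gx; apply/cent1P/commgP/conjg_fixP.
  by have /ffunP/(_ i) := xa; rewrite ffunE.
split; first by apply/forallP => i; have /setIP[] := Cx i.
apply/afix1P/ffunP => i; rewrite ffunE; apply/conjg_fixP/commgP/cent1P.
by have /setIP[] := Cx i.
Qed.

Lemma card_afix_tconj (G : {group gT}) a :
  #|'Fix_(tuples_in G n | tconj_action)[a]| = (#|'C_G[a]| ^ n)%N.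
Proof. by rewrite (eq_card (afix_tconj G a)) card_ffun_on card_ord. Qed.

Lemma alpha_mul_card (G : {group gT}) :
  (alpha G n * #|G| = \sum_(a in G) #|'C_G[a]| ^ n)%N.
Proof.
rewrite -(Frobenius_Cauchy (acts_tconj G)).
by apply: eq_bigr => a _; rewrite card_afix_tconj.
Qed.

End SimultaneousConjugation.

Lemma prime_sq_nontrivial_factor p d e :
  prime p -> (d * e = p ^ 2)%N -> (1 < d)%N -> (1 < e)%N -> d = p.
Proof.
move=> p_pr de_p2 d_gt1 e_gt1.
have /(dvdn_pfactor _ _ p_pr)[[|[|[|//]]] _ def_d] : (d %| p ^ 2)%N.
- by rewrite -de_p2 dvdn_mulr.
- by move: d_gt1; rewrite def_d.
- by rewrite def_d expn1.
have e1 : e = 1%N.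
  by apply/eqP; rewrite -(eqn_pmul2l (ltnW d_gt1)) de_p2 def_d muln1.
by move: e_gt1; rewrite e1.
Qed.

Section CenterIndexPrimeSquare.
Local Open Scope group_scope.
Variables (gT : finGroupType) (G : {group gT}) (p : nat).
Hypotheses (p_pr : prime p) (indexZ : #|G : 'Z(G)| = (p ^ 2)%N).

Lemma index_cent1_noncentral a : a \in G :\: 'Z(G) -> #|G : 'C_G[a]| = p.
Proof.
case/setDP=> Ga aZ.
have sZC : 'Z(G) \subset 'C_G[a].
  by rewrite subsetI center_sub sub_cent1 (subsetP _ a Ga) // centsC subsetIr.
have sCG : 'C_G[a] \subset G := subsetIl G _.
apply: (prime_sq_nontrivial_factor (e := #|'C_G[a] : 'Z(G)|) p_pr).
- by rewrite Lagrange_index.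
- rewrite indexg_gt1; apply: contra aZ => sGC.
  by rewrite inE Ga -sub_cent1 (subset_trans sGC) ?subsetIr.
- by rewrite indexg_gt1; apply: contra aZ => /subsetP; apply; rewrite subcent1_id.
Qed.

Lemma alpha_mul_card_center_index_p2 n :
  (alpha G n * #|G| = #|'Z(G)| * #|G| ^ n + (#|G| - #|'Z(G)|) * (#|G| %/ p) ^ n)%N.
Proof.
have sZG := center_sub G.
rewrite alpha_mul_card (big_setID 'Z(G)) /= (setIidPr sZG).
rewrite (eq_bigr (fun=> #|G| ^ n)%N); last first.
  by move=> a /centerP[Ga cGa]; rewrite (setIidPl _) // sub_cent1; apply/centP.
rewrite [X in (_ + X)%N](eq_bigr (fun=> (#|G| %/ p) ^ n)%N); last first.
  by move=> a /index_cent1_noncentral <-; rewrite divg_indexS ?subsetIl.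
by rewrite !sum_nat_const cardsD (setIidPr sZG).
Qed.

End CenterIndexPrimeSquare.

Theorem lemma7p1 (gT : finGroupType) (G : {group gT}) (p m : nat) :
  prime p -> #|G| = (p ^ m)%N -> #|(G / 'Z(G))%g| = (p ^ 2)%N ->
  forall n : nat,
    (alpha G n)%:R =
      ((p ^ m)%:R : rat)^-1 *
        ((p ^ (m - 2))%:R * ((p ^ m)%:R) ^+ n
         + ((p ^ m)%:R - (p ^ (m - 2))%:R) * ((p ^ (m - 1))%:R) ^+ n).
Proof.
move=> p_pr cardG; rewrite card_quotient ?normal_norm ?center_normal // => indexZ n.
have p_gt0 := prime_gt0 p_pr.
have le2m : (2 <= m)%N.
  by rewrite -(leq_exp2l _ _ (prime_gt1 p_pr)) -indexZ -cardG dvdn_leq ?dvdn_indexg.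
have cardZ : #|'Z(G)%g| = (p ^ (m - 2))%N.
  by rewrite -(divg_indexS (center_sub G)) indexZ cardG expnB.
have cardG_div_p : (p ^ m %/ p = p ^ (m - 1))%N.
  by rewrite expnB ?expn1 ?(leq_trans _ le2m).
have := alpha_mul_card_center_index_p2 p_pr indexZ n.
rewrite cardZ cardG cardG_div_p => alphaE.
have pm_neq0 : (p ^ m)%:R != 0 :> rat by rewrite pnatr_eq0 -lt0n expn_gt0 p_gt0.
apply: (canRL (mulKf pm_neq0)).
rewrite -natrB ?leq_exp2l ?leq_subr ?prime_gt1 //.
by rewrite -!natrX -!natrM -natrD mulnC alphaE.
Qed.
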